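(* Let $q$ be a prime power, $k\ge 3$, $n\ge \frac{k(k+1)}{2}-2$, and let $\alpha_1,\dots,\alpha_n\in\mathbb F_q$ be pairwise distinct. Then there exist $\mathbf i=(i_1,\dots,i_{k-1}),\mathbf j=(j_1,\dots,j_{k-1})\in S_{k-1}(n)$ such that $j_\ell<i_\ell\le \frac{k(k+1)}2-2$ for all $\ell=1,\dots,k-1$ and the $(k-1)\times(k-1)$ matrix over $\mathbb F_q$ whose $(r,s)$ entry is $\alpha_{i_s}^{\,r}-\alpha_{j_s}^{\,r}$ ($1\le r,s\le k-1$) is invertible.
   Context: For $1\le t\le n$, $S_t(n)=\{(i_1,\dots,i_t)\in\{1,\dots,n\}^t:\ 1\le i_1<i_2<\dots<i_t\le n\}$. *)

From mathcomp Require Import all_boot all_order all_algebra all_field.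
Set Implicit Arguments. Unset Strict Implicit. Unset Printing Implicit Defensive.

Definition S_t (t n : nat) (s : seq nat) : bool :=
  [&& size s == t, sorted ltn s & all (fun x => (1 <= x <= n)%N) s].

From mathcomp Require Import all_boot all_order all_algebra all_field.
From mathcomp Require Import zify.
Import GRing.Theory.
Local Open Scope ring_scope.

(* If a row vector v annihilates the matrix (b_{s+1}^r - b_s^r)_{r,s}, then the
   polynomial P(x) = sum_r v_r x^r (r >= 1), of degree at most m, takes the same
   value at the m+1 distinct points b_0, ..., b_m; hence P is constant and v = 0.
   The theorem follows by taking i = (2, ..., k) and j = (1, ..., k-1). *)

Lemma poly_constant_on (R : idomainType) (p : {poly R}) (s : seq R) x :
  x \in s -> uniq s -> (size p <= size s)%N ->
  {in s, forall y, p.[y] = p.[x]} -> p = p.[x]%:P.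
Proof.
move=> xs s_uniq size_p p_const; apply/eqP; rewrite -subr_eq0; apply/eqP.
apply: roots_geq_poly_eq0 s_uniq _.
  by apply/allP => y ys; rewrite /root hornerD hornerN hornerC p_const ?subrr.
apply: leq_trans (size_polyD _ _) _; rewrite size_polyN geq_max size_p.
have s_gt0 : (0 < size s)%N by case: (s) xs.
exact: leq_trans (size_polyC_leq1 _) s_gt0.
Qed.

Lemma horner_rVpolyX (R : comNzRingType) m (v : 'rV[R]_m) x :
  (rVpoly v * 'X).[x] = \sum_(r < m) v 0 r * x ^+ r.+1.
Proof.
rewrite hornerMX (horner_coef_wide _ (size_poly _ _)) mulr_suml.
by apply: eq_bigr => r _; rewrite coef_rVpoly_ord exprSr mulrA.
Qed.

Section PowerDifferences.

Variables (F : fieldType) (b : nat -> F).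

Definition pow_diff_mx m : 'M[F]_m :=
  \matrix_(r < m, s < m) (b s.+1 ^+ r.+1 - b s ^+ r.+1).

Lemma pow_diff_mx_row m (v : 'rV[F]_m) (s : 'I_m) :
  (v *m pow_diff_mx m) 0 s = (rVpoly v * 'X).[b s.+1] - (rVpoly v * 'X).[b s].
Proof.
rewrite mxE !horner_rVpolyX -sumrB.
by apply: eq_bigr => r _; rewrite mxE mulrBr.
Qed.

Lemma pow_diff_mx_unit m :
  {in iota 0 m.+1 &, injective b} -> pow_diff_mx m \in unitmx.
Proof.
move=> b_inj; rewrite unitmxE unitfE; apply/det0P => -[v /negP nz_v vM].
apply: nz_v; set P := rVpoly v * 'X.
have P_step s : (s < m)%N -> P.[b s.+1] = P.[b s].
  move=> lt_s_m; apply/eqP; rewrite -subr_eq0 -(pow_diff_mx_row _ v (Ordinal lt_s_m)).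
  by rewrite vM mxE.
have P_const s : (s <= m)%N -> P.[b s] = P.[b 0].
  by elim: s => [//|s IHs] lt_s_m; rewrite P_step // IHs // ltnW.
have P_size : (size P <= size (map b (iota 0 m.+1)))%N.
  rewrite size_map size_iota; apply: leq_trans (size_polyMleq _ _) _.
  by rewrite size_polyX addn2 /= ltnS size_poly.
have P_cst : P = (P.[b 0])%:P.
  apply: (@poly_constant_on _ P _ (b 0) _ _ P_size).
  - by rewrite map_f // mem_iota.
  - by rewrite (map_inj_in_uniq b_inj) iota_uniq.
  move=> _ /mapP[s s_in ->]; apply: P_const.
  by move: s_in; rewrite mem_iota ltnS.
apply/eqP/rowP => r; rewrite mxE -(coef_rVpoly_ord v r).
by have := congr1 (fun p : {poly F} => p`_r.+1) P_cst; rewrite coefMX coefC.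
Qed.

End PowerDifferences.

Arguments pow_diff_mx {F}.

Lemma S_t_iota t n a : (0 < a)%N -> (a + t <= n.+1)%N -> S_t t n (iota a t).
Proof.
move=> a_gt0 le_at; rewrite /S_t size_iota eqxx iota_ltn_sorted /=.
by apply/allP => x; rewrite mem_iota; lia.
Qed.

Theorem lemma3p8 (F : finFieldType) (k n : nat) (alpha : nat -> F) :
  (3 <= k)%N ->
  ((k * (k + 1)) %/ 2 - 2 <= n)%N ->
  (forall a b, (1 <= a <= n)%N -> (1 <= b <= n)%N -> alpha a = alpha b -> a = b) ->
  exists i j : seq nat,
    [/\ S_t (k - 1) n i, S_t (k - 1) n j,
        (forall l, (l < k - 1)%N ->
            (nth 0 j l < nth 0 i l <= (k * (k + 1)) %/ 2 - 2)%N) &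
        (\matrix_(r < k - 1, s < k - 1)
            (alpha (nth 0%N i s) ^+ r.+1 - alpha (nth 0%N j s) ^+ r.+1)) \in unitmx].
Proof.
move=> k_ge3 le_N_n alpha_inj.
have le_k_N : (k + 2 <= (k * (k + 1)) %/ 2)%N by rewrite leq_divRL //; nia.
exists (iota 2 (k - 1)), (iota 1 (k - 1)); split.
- by apply: S_t_iota; lia.
- by apply: S_t_iota; lia.
- by move=> l lt_l; rewrite !nth_iota //; lia.
have -> : \matrix_(r < k - 1, s < k - 1) (alpha (nth 0%N (iota 2 (k - 1)) s) ^+ r.+1
            - alpha (nth 0%N (iota 1 (k - 1)) s) ^+ r.+1)
          = pow_diff_mx (alpha \o succn) (k - 1).
  by apply/matrixP => r s; rewrite !mxE !nth_iota.
apply: pow_diff_mx_unit => a c; rewrite !mem_iota => a_lt c_lt eq_ac.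
have : a.+1 = c.+1 by apply: alpha_inj eq_ac; lia.
by case.
Qed.
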